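(* Let $c_1,\dots,c_7$ be real numbers and let $\mathcal{C}$ be the $6\times 6$ matrix \[ \mathcal{C}=\begin{pmatrix} 0 & c_5 & 0 & c_1 & 0 & 0 \\ c_4 & 0 & c_7 & 0 & c_2 & 0 \\ 0 & c_6 & 0 & 0 & 0 & c_3 \\ c_1 & 0 & 0 & 0 & c_5 & 0 \\ 0 & c_2 & 0 & c_4 & 0 & c_7 \\ 0 & 0 & c_3 & 0 & c_6 & 0 \end{pmatrix}. \] Then $\det\mathcal{C} = -\left(c_1c_2c_3 - c_1c_6c_7 - c_3c_4c_5\right)^2$. Consequently, $\mathcal{C}$ is non-singular (equivalently, for every vector $(I^1,\dots,I^6)^\top\in\mathbb{R}^6$ the linear system $(I^1,\dots,I^6)^\top=\mathcal{C}\,(dI_1,\dots,dI_6)^\top$ has a unique solution $(dI_1,\dots,dI_6)^\top$) if and only if $c_1c_2c_3 - c_1c_6c_7 - c_3c_4c_5 \neq 0$.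
   Context: In the paper, $c_1,c_2,c_3$ are contralateral and $c_4,\dots,c_7$ are ipsilateral coupling strengths in a network of six coupled oscillators (one per insect leg); the matrix $\mathcal{C}$ encodes how an external input added to each unit can be redistributed as perturbations $dI_j$ of the coupling terms. *)

From mathcomp Require Import all_boot all_order all_algebra.
Set Implicit Arguments. Unset Strict Implicit. Unset Printing Implicit Defensive.
Import GRing.Theory Num.Theory.
Local Open Scope ring_scope.

(* The 6x6 coupling matrix C of the paper, rows/columns indexed 0..5
   (paper index k corresponds to ordinal k-1). *)
Definition couplingMx (R : nzRingType) (c1 c2 c3 c4 c5 c6 c7 : R) : 'M[R]_6 :=
  \matrix_(i < 6, j < 6)
    match nat_of_ord i, nat_of_ord j with
    | 0, 1 => c5 | 0, 3 => c1
    | 1, 0 => c4 | 1, 2 => c7 | 1, 4 => c2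
    | 2, 1 => c6 | 2, 5 => c3
    | 3, 0 => c1 | 3, 4 => c5
    | 4, 1 => c2 | 4, 3 => c4 | 4, 5 => c7
    | 5, 2 => c3 | 5, 4 => c6
    | _, _ => 0
    end.

(* Units 1-3 and 4-6 are the legs of the two sides of the body, and C has the
   block form [[A, Δ], [Δ, A]] reflecting the left/right symmetry: A holds the
   ipsilateral couplings c4..c7 and Δ = diag(c1, c2, c3) the contralateral
   ones.  Hence det C = det (A + Δ) * det (A - Δ), and these two 3x3
   determinants are D and -D. *)
From mathcomp Require Import all_boot all_order all_algebra ring.

Import GRing.Theory Num.Theory.
Local Open Scope ring_scope.

Section Determinants.
Context {R : comNzRingType}.

(* Indexing by nat rather than by ordinals lets the entries of matrices defined
   by pattern matching reduce by computation. *)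
Lemma det_mx33 (a : nat -> nat -> R) :
  \det (\matrix_(i < 3, j < 3) a i j)
    = a 0%N 0%N * (a 1%N 1%N * a 2%N 2%N - a 1%N 2%N * a 2%N 1%N)
    - a 0%N 1%N * (a 1%N 0%N * a 2%N 2%N - a 1%N 2%N * a 2%N 0%N)
    + a 0%N 2%N * (a 1%N 0%N * a 2%N 1%N - a 1%N 1%N * a 2%N 0%N).
Proof.
rewrite (expand_det_row _ 0) !big_ord_recl big_ord0 /cofactor.
rewrite !(expand_det_row _ 0) !big_ord_recl !big_ord0 /cofactor !det_mx11 !mxE /=.
by rewrite /bump /=; ring.
Qed.

Lemma det_block_mx_sym {n} (A B : 'M[R]_n) :
  \det (block_mx A B B A) = \det (A + B) * \det (A - B).
Proof.
have reduce : block_mx 1%:M 0 (- 1%:M) 1%:M *m block_mx A B B A *m block_mx 1%:M 0 1%:M 1%:M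
            = block_mx (A + B) B 0 (A - B).
  rewrite !mulmx_block !(mul1mx, mulmx1, mul0mx, mulmx0, mulNmx, addr0, add0r).
  by congr block_mx; rewrite addrC ?addrA ?addrK ?addNr.
have := congr1 determinant reduce.
by rewrite !det_mulmx !det_lblock det_ublock !det1 !mul1r !mulr1.
Qed.

End Determinants.

Section CouplingBlocks.
Context {R : nzRingType} (c1 c2 c3 c4 c5 c6 c7 : R).

Definition ipsilateral (i j : nat) : R :=
  match i, j with
  | 0, 1 => c5 | 1, 0 => c4 | 1, 2 => c7 | 2, 1 => c6
  | _, _ => 0
  end.

Definition contralateral (i j : nat) : R :=
  match i, j with
  | 0, 0 => c1 | 1, 1 => c2 | 2, 2 => c3
  | _, _ => 0
  end.

Definition ipsilateralMx : 'M[R]_3 := \matrix_(i, j) ipsilateral i j.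
Definition contralateralMx : 'M[R]_3 := \matrix_(i, j) contralateral i j.

Lemma couplingMx_block :
  couplingMx c1 c2 c3 c4 c5 c6 c7
  = block_mx ipsilateralMx contralateralMx contralateralMx ipsilateralMx.
Proof.
apply/(@matrixP _ (3 + 3) (3 + 3)) => i j.
rewrite -[i]splitK -[j]splitK.
case: (split i) => k; case: (split j) => l;
  rewrite ?(block_mxEul, block_mxEur, block_mxEdl, block_mxEdr) !mxE;
  by case: k => [[|[|[|k]]] ?]; case: l => [[|[|[|l]]] ?].
Qed.

End CouplingBlocks.

Section SideDeterminants.
Context {R : comNzRingType} (c1 c2 c3 c4 c5 c6 c7 : R).

Lemma det_ipsilateral_add_contralateral :
  \det (ipsilateralMx c4 c5 c6 c7 + contralateralMx c1 c2 c3)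
  = c1 * c2 * c3 - c1 * c6 * c7 - c3 * c4 * c5.
Proof.
pose a i j := ipsilateral c4 c5 c6 c7 i j + contralateral c1 c2 c3 i j.
have -> : ipsilateralMx c4 c5 c6 c7 + contralateralMx c1 c2 c3 = \matrix_(i, j) a i j.
  by apply/matrixP => i j; rewrite !mxE.
by rewrite det_mx33 /a /=; ring.
Qed.

Lemma det_ipsilateral_sub_contralateral :
  \det (ipsilateralMx c4 c5 c6 c7 - contralateralMx c1 c2 c3)
  = - (c1 * c2 * c3 - c1 * c6 * c7 - c3 * c4 * c5).
Proof.
pose a i j := ipsilateral c4 c5 c6 c7 i j - contralateral c1 c2 c3 i j.
have -> : ipsilateralMx c4 c5 c6 c7 - contralateralMx c1 c2 c3 = \matrix_(i, j) a i j.
  by apply/matrixP => i j; rewrite !mxE.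
by rewrite det_mx33 /a /=; ring.
Qed.

Lemma det_couplingMx :
  \det (couplingMx c1 c2 c3 c4 c5 c6 c7)
  = - (c1 * c2 * c3 - c1 * c6 * c7 - c3 * c4 * c5) ^+ 2.
Proof.
rewrite couplingMx_block (det_block_mx_sym (ipsilateralMx c4 c5 c6 c7)).
by rewrite det_ipsilateral_add_contralateral det_ipsilateral_sub_contralateral mulrN -expr2.
Qed.

End SideDeterminants.

Lemma unique_solution_unitmx {F : fieldType} {n} (A : 'M[F]_n) :
  (forall b : 'cV_n, exists! x : 'cV_n, b = A *m x) <-> A \in unitmx.
Proof.
split=> [uniqA | unitA b].
- rewrite unitmxE unitfE -det_tr; apply/negP => /det0P[v v_neq0 vA0].
  have [x [_ x_uniq]] := uniqA 0.
  have x_v : x = v^T by apply: x_uniq; rewrite -[A]trmxK -trmx_mul vA0 trmx0.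
  have x_0 : x = 0 by apply: x_uniq; rewrite mulmx0.
  by move: v_neq0; rewrite -[v]trmxK -x_v x_0 trmx0 eqxx.
- exists (invmx A *m b); split=> [|x ->].
    by rewrite mulmxA mulmxV ?mul1mx.
  by rewrite mulmxA mulVmx ?mul1mx.
Qed.

Theorem mainTheorem1 (R : realFieldType) (c1 c2 c3 c4 c5 c6 c7 : R) :
  let C := couplingMx c1 c2 c3 c4 c5 c6 c7 in
  let D := c1 * c2 * c3 - c1 * c6 * c7 - c3 * c4 * c5 in
  [/\ \det C = - D ^+ 2,
      (C \in unitmx) <-> D != 0 &
      (forall I : 'cV[R]_6, exists! dI : 'cV[R]_6, I = C *m dI) <-> D != 0].
Proof.
move=> C D.
have detC : \det C = - D ^+ 2 := det_couplingMx c1 c2 c3 c4 c5 c6 c7.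
have unitC : (C \in unitmx) <-> D != 0.
  by rewrite unitmxE unitfE detC oppr_eq0 expf_eq0 /=; split.
split=> //; exact: iff_trans (unique_solution_unitmx C) unitC.
Qed.
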